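(* Let $\mathcal{D}=(V,E)$ be a directed acyclic graph with well-ordered vertex set $V=\{1,\dots,d\}$ (every edge $i\to j$ has $i<j$), and suppose $\mathcal{D}$ is a polytree, i.e. between any two vertices there is at most one path. Let $X=(X_1,\dots,X_d)$ be given by the recursive max-linear structural equation model $$X_v=\bigvee_{u\in \mathrm{pa}(v)} c_{vu}X_u \vee Z_v,\qquad v=1,\dots,d,$$ with edge weights $c_{vu}>0$ for $u\in\mathrm{pa}(v)$ and independent identically distributed noise variables $Z_1,\dots,Z_d$ with a continuous distribution supported on $(0,\infty)$. Then the minimum max-linear DAG $\mathcal{D}^B$ of $X$ equals $\mathcal{D}$.
   Context: $a\vee b=\max(a,b)$. A walk is a sequence of vertices with consecutive vertices adjacent (ignoring direction); a path is a walk with no repeated vertices; a directed path from $u$ to $v$ is a path $u=k_0\to k_1\to\cdots\to k_n=v$ with all edges pointing forward. $\mathrm{pa}(v)$ is the set of parents of $v$, $\mathrm{an}(v)$ the set of vertices with a directed path to $v$. For a directed path $\pi=[u=k_0\to k_1\to\cdots\to k_n=v]$ define its weight $d_{vu}(\pi)=\prod_{l=0}^{n-1}c_{k_{l+1}k_l}$, and for $u\in\mathrm{an}(v)$ let $b_{vu}=\bigvee_{\pi} d_{vu}(\pi)$, the maximum over all directed paths $\pi$ from $u$ to $v$ (with $b_{vv}=1$ and $b_{vu}=0$ if $u\notin\mathrm{an}(v)\cup\{v\}$); then $X_v=\bigvee_{u} b_{vu}Z_u$. A directed path $\pi$ from $u$ to $v$ is called max-weighted if $d_{vu}(\pi)=b_{vu}$.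 The minimum max-linear DAG $\mathcal{D}^B$ is the DAG obtained from $\mathcal{D}$ by removing every edge that does not lie on any max-weighted path (such removal does not change the distribution of $X$). *)

From mathcomp Require Import all_boot all_order all_algebra.
Set Implicit Arguments. Unset Strict Implicit. Unset Printing Implicit Defensive.
Import Order.TTheory GRing.Theory Num.Theory.
Local Open Scope ring_scope.

Section MaxLinear.
Variables (d : nat) (R : realFieldType).
(* E u v  means the edge u -> v;  c v u is the weight c_{vu} of the edge u -> v *)
Variables (E : rel 'I_d) (c : 'I_d -> 'I_d -> R).

Definition adj : rel 'I_d := fun x y => E x y || E y x.

Definition is_path (u v : 'I_d) (p : seq 'I_d) : Prop :=
  [/\ path adj u p, uniq (u :: p) & last u p = v].

Definition polytree : Prop :=
  forall u v p q, is_path u v p -> is_path u v q -> p = q.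

Definition is_dpath (u v : 'I_d) (p : seq 'I_d) : Prop :=
  [/\ path E u p, uniq (u :: p) & last u p = v].

Fixpoint dweight (u : 'I_d) (p : seq 'I_d) : R :=
  if p is x :: p' then c x u * dweight x p' else 1.

(* max-weighted: d_{vu}(pi) = b_{vu}, the maximum of d_{vu} over all
   directed paths from u to v (written out as: pi attains that maximum) *)
Definition max_weighted (u v : 'I_d) (p : seq 'I_d) : Prop :=
  is_dpath u v p /\ forall q, is_dpath u v q -> dweight u q <= dweight u p.

Definition edge_on (x y u : 'I_d) (p : seq 'I_d) : bool :=
  (x, y) \in zip (u :: p) p.

(* edges of the minimum max-linear DAG D^B: the edges of D lying on some
   max-weighted path *)
Definition minML_edge (x y : 'I_d) : Prop :=
  E x y /\ exists u v p, max_weighted u v p /\ edge_on x y u p.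

End MaxLinear.

(* In a polytree a directed path is the only path between its endpoints, so
   it is trivially max-weighted; in particular every edge x -> y, being a
   directed path on its own, survives in the minimum max-linear DAG. *)

From mathcomp Require Import all_boot all_order all_algebra.
Import Order.TTheory GRing.Theory Num.Theory.
Local Open Scope ring_scope.

Section PolytreeMaxWeighted.
Variables (d : nat) (R : realFieldType).
Variables (E : rel 'I_d) (c : 'I_d -> 'I_d -> R).

Lemma dpath_is_path {u v : 'I_d} {p : seq 'I_d} :
  is_dpath E u v p -> is_path E u v p.
Proof.
case=> Ep up lp; split=> //.
by apply: sub_path Ep => a b Eab; rewrite /adj Eab.
Qed.

Lemma polytree_dpath_uniq {u v : 'I_d} {p q : seq 'I_d} :
  polytree E -> is_dpath E u v p -> is_dpath E u v q -> p = q.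
Proof. by move=> tree /dpath_is_path pp /dpath_is_path pq; apply: tree pp pq. Qed.

Lemma polytree_dpath_max_weighted {u v : 'I_d} {p : seq 'I_d} :
  polytree E -> is_dpath E u v p -> max_weighted E c u v p.
Proof.
move=> tree dp; split=> // q dq.
by rewrite (polytree_dpath_uniq tree dq dp).
Qed.

Lemma edge_dpath {x y : 'I_d} : E x y -> x != y -> is_dpath E x y [:: y].
Proof. by move=> Exy nxy; split; rewrite //= ?Exy ?inE ?nxy. Qed.

Lemma edge_on_edge {x y : 'I_d} : edge_on x y x [:: y].
Proof. by rewrite /edge_on /= inE. Qed.

End PolytreeMaxWeighted.

Theorem mainTheorem1 (R : realFieldType) (d : nat) (E : rel 'I_d)
  (c : 'I_d -> 'I_d -> R)
  (well_ordered : forall i j : 'I_d, E i j -> (i < j)%N)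
  (c_pos : forall u v : 'I_d, E u v -> 0 < c v u)
  (tree : polytree E) :
  forall x y : 'I_d, minML_edge E c x y <-> E x y.
Proof.
move=> x y; split; first by case.
move=> Exy; split=> //.
have nxy : x != y by apply: contraTneq (well_ordered _ _ Exy) => ->; rewrite ltnn.
exists x, y, [:: y]; split; last exact: edge_on_edge.
exact/polytree_dpath_max_weighted/edge_dpath.
Qed.
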